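(* Let $(L,b)$ and $(M,b)$ be cochain complexes of vector spaces, and let $i:(L,b)\to(M,b)$, $p:(M,b)\to(L,b)$ be quasi-isomorphisms (cochain maps inducing isomorphisms in cohomology) with $ip=1$. Let $\delta:M\to M$ be a linear map of degree $+1$ with $(b+\delta)^2=0$. Then $(b+p\delta i)^2=0$ on $L$, and $i:(L,b+p\delta i)\to(M,b+\delta)$ and $p:(M,b+\delta)\to(L,b+p\delta i)$ are quasi-isomorphisms (cochain maps) satisfying $ip=1$.
   Context: All maps are linear. *)

From HB Require Import structures.
From mathcomp Require Import all_boot all_order all_algebra.
Set Implicit Arguments. Unset Strict Implicit. Unset Printing Implicit Defensive.
Import GRing.Theory.
Local Open Scope ring_scope.

(* A Z-graded vector space over K is a family  L : int -> lmodType K.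
   A degree +1 map is a family  d : forall n, L n -> L (n+1). *)

Section Complexes.
Variable K : fieldType.

Definition is_differential (L : int -> lmodType K)
    (d : forall n : int, L n -> L (n + 1)%R) : Prop :=
  forall (n : int) (x : L n), d (n + 1)%R (d n x) = 0.

Definition cochain_map (L M : int -> lmodType K)
    (dL : forall n : int, L n -> L (n + 1)%R)
    (dM : forall n : int, M n -> M (n + 1)%R)
    (f : forall n : int, L n -> M n) : Prop :=
  forall (n : int) (x : L n), f (n + 1)%R (dL n x) = dM n (f n x).

(* f induces an isomorphism H^k(L) -> H^k(M) in every degree k = m+1
   (m ranges over all of int, so k does too), where
   H^(m+1)(L) = ker dL_(m+1) / im dL_m. Written out without quotients:
   surjectivity and injectivity of the induced map on cohomology. *)
Definition quasi_iso (L M : int -> lmodType K)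
    (dL : forall n : int, L n -> L (n + 1)%R)
    (dM : forall n : int, M n -> M (n + 1)%R)
    (f : forall n : int, L n -> M n) : Prop :=
  forall m : int,
    (forall y : M (m + 1)%R, dM (m + 1)%R y = 0 ->
       exists x : L (m + 1)%R, dL (m + 1)%R x = 0 /\
         exists z : M m, f (m + 1)%R x - y = dM m z) /\
    (forall x : L (m + 1)%R, dL (m + 1)%R x = 0 ->
       (exists z : M m, f (m + 1)%R x = dM m z) ->
       exists w : L m, x = dL m w).

End Complexes.

From HB Require Import structures.
From mathcomp Require Import all_boot all_order all_algebra.
Import GRing.Theory.
Local Open Scope ring_scope.

(* Since [i p = 1], the complex [L] splits as [p M ⊕ ker i], and [ker i] is
   [b]-acyclic because [i] is a surjective quasi-isomorphism. The transferred
   differential [b + p δ i] agrees with [b] on [ker i] and is intertwined with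
   [b + δ] by both [i] and [p]; so every cocycle of [L] is, up to a boundary
   supported in [ker i], of the form [p y] with [y] a cocycle of [M]. *)

Section PerturbationTransfer.
Variables (K : fieldType) (L M : int -> lmodType K).
Variables (bL : forall n : int, {linear L n -> L (n + 1)%R})
          (bM : forall n : int, {linear M n -> M (n + 1)%R})
          (i : forall n : int, {linear L n -> M n})
          (p : forall n : int, {linear M n -> L n})
          (delta : forall n : int, {linear M n -> M (n + 1)%R}).

Hypothesis bL_diff : is_differential (fun n x => bL n x).
Hypothesis bM_diff : is_differential (fun n x => bM n x).
Hypothesis i_cochain :
  cochain_map (fun n x => bL n x) (fun n x => bM n x) (fun n x => i n x).
Hypothesis p_cochain :
  cochain_map (fun n x => bM n x) (fun n x => bL n x) (fun n x => p n x).
Hypothesis i_quasi_iso :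
  quasi_iso (fun n x => bL n x) (fun n x => bM n x) (fun n x => i n x).
Hypothesis ipK : forall (n : int) (x : M n), i n (p n x) = x.
Hypothesis DM_diff : is_differential (fun n x => bM n x + delta n x).

Definition DM (n : int) (x : M n) : M (n + 1)%R := bM n x + delta n x.
Definition DL (n : int) (x : L n) : L (n + 1)%R :=
  bL n x + p (n + 1)%R (delta n (i n x)).

Lemma i_subr_pi (n : int) (x : L n) : i n (x - p n (i n x)) = 0.
Proof. by rewrite linearB /= ipK subrr. Qed.

Lemma ker_i_acyclic (m : int) (k : L (m + 1)%R) :
  i (m + 1)%R k = 0 -> bL (m + 1)%R k = 0 ->
  exists2 k' : L m, i m k' = 0 & bL m k' = k.
Proof.
move=> ik bk; have [_ i_inj] := i_quasi_iso m.
have [|w kE] := i_inj k bk; first by exists 0; rewrite ik linear0.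
exists (w - p m (i m w)); first exact: i_subr_pi.
by rewrite linearB /= -p_cochain -i_cochain -kE ik linear0 subr0.
Qed.

Lemma DL_ker_i (n : int) (k : L n) : i n k = 0 -> DL n k = bL n k.
Proof. by move=> ik; rewrite /DL ik !linear0 addr0. Qed.

Lemma DLD (n : int) (u v : L n) : DL n (u + v) = DL n u + DL n v.
Proof. by rewrite /DL !linearD /= addrACA. Qed.

Lemma DLN (n : int) (u : L n) : DL n (- u) = - DL n u.
Proof. by rewrite /DL !linearN /= opprD. Qed.

Lemma i_cochain_perturbed : cochain_map DL DM (fun n x => i n x).
Proof. by move=> n x; rewrite /DL /DM linearD /= ipK i_cochain. Qed.

Lemma p_cochain_perturbed : cochain_map DM DL (fun n x => p n x).
Proof. by move=> n y; rewrite /DL /DM ipK linearD /= p_cochain. Qed.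

Lemma DL_diff : is_differential DL.
Proof.
(* [DL^2 = p ((b + δ)^2 - b^2) i]. *)
move=> n x.
have DM2 := DM_diff n (i n x).
rewrite /= !linearD /= bM_diff add0r in DM2.
rewrite {1}/DL i_cochain_perturbed /DL linearD /= bL_diff add0r.
by rewrite -p_cochain /DM [delta _ (_ + _)]linearD -linearD DM2 linear0.
Qed.

Lemma DL_cocycle_retract (m : int) (x : L (m + 1)%R) :
  DL (m + 1)%R x = 0 ->
  exists k : L m, DL m k = x - p (m + 1)%R (i (m + 1)%R x).
Proof.
move=> Dx; have ik := i_subr_pi _ x.
have [|k ik' kE] := ker_i_acyclic _ _ ik.
  by rewrite -DL_ker_i // DLD DLN -p_cochain_perturbed -i_cochain_perturbed
             Dx !linear0 addr0.
by exists k; rewrite DL_ker_i.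
Qed.

Lemma i_quasi_iso_perturbed : quasi_iso DL DM (fun n x => i n x).
Proof.
move=> m; split.
  move=> y Dy; exists (p (m + 1)%R y).
  split; first by rewrite -p_cochain_perturbed Dy linear0.
  by exists 0; rewrite ipK subrr /DM !linear0 addr0.
move=> x Dx [z xE]; have [k kE] := DL_cocycle_retract _ _ Dx.
by exists (k + p m z); rewrite DLD kE -p_cochain_perturbed -xE addrNK.
Qed.

Lemma p_quasi_iso_perturbed : quasi_iso DM DL (fun n x => p n x).
Proof.
move=> m; split.
  move=> y Dy; exists (i (m + 1)%R y).
  split; first by rewrite -i_cochain_perturbed Dy linear0.
  have [k kE] := DL_cocycle_retract _ _ Dy.
  by exists (- k); rewrite DLN kE opprB.
by move=> x _ [z xE]; exists (i m z); rewrite -i_cochain_perturbed -xE ipK.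
Qed.

End PerturbationTransfer.

Theorem mainTheorem4 (K : fieldType) (L M : int -> lmodType K)
  (bL : forall n : int, {linear L n -> L (n + 1)%R})
  (bM : forall n : int, {linear M n -> M (n + 1)%R})
  (i : forall n : int, {linear L n -> M n})
  (p : forall n : int, {linear M n -> L n})
  (delta : forall n : int, {linear M n -> M (n + 1)%R}) :
  is_differential (fun n x => bL n x) ->
  is_differential (fun n x => bM n x) ->
  cochain_map (fun n x => bL n x) (fun n x => bM n x) (fun n x => i n x) ->
  cochain_map (fun n x => bM n x) (fun n x => bL n x) (fun n x => p n x) ->
  quasi_iso (fun n x => bL n x) (fun n x => bM n x) (fun n x => i n x) ->
  quasi_iso (fun n x => bM n x) (fun n x => bL n x) (fun n x => p n x) ->
  (forall (n : int) (x : M n), i n (p n x) = x) ->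
  is_differential (fun n x => bM n x + delta n x) ->
  let DL := fun (n : int) (x : L n) => bL n x + p (n + 1)%R (delta n (i n x)) in
  let DM := fun (n : int) (x : M n) => bM n x + delta n x in
  is_differential DL /\
  cochain_map DL DM (fun n x => i n x) /\
  cochain_map DM DL (fun n x => p n x) /\
  quasi_iso DL DM (fun n x => i n x) /\
  quasi_iso DM DL (fun n x => p n x) /\
  (forall (n : int) (x : M n), i n (p n x) = x).
Proof.
move=> bL_diff bM_diff i_cochain p_cochain i_qiso _ ipK DM_diff DL DM.
split; first exact: DL_diff.
split; first exact: i_cochain_perturbed.
split; first exact: p_cochain_perturbed.
split; first exact: i_quasi_iso_perturbed.
by split; first exact: p_quasi_iso_perturbed.
Qed.
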